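(* Let $p,q$ be integers with $1+|p|<|q|$ and $\gcd(p,q)=1$, and assume $t(x)=x^2+px-q$ is irreducible in $\mathbb{Z}[x]$. Then for every nonzero $\gamma\in\mathbb{Z}^2$ the language $\psi_{p,q}^{-1}(\langle\gamma\rangle)$ is not regular.
   Context: For $f,g\in\mathbb{Z}[x]$ write $f\sim g$ if $t$ divides $f-g$; identify $\mathbb{Z}^2$ with the additive group of $\mathbb{Z}[x]/\langle t\rangle$ via $(h_1,h_2)\mapsto[h_1x+h_2]_\sim$. Let $\Sigma_q=\{-(|q|-1),\dots,|q|-1\}$ with the order $-(|q|-1)<\dots<|q|-1$; a string $a_0a_1\dots a_n\in\Sigma_q^*$ represents the polynomial $a_nx^n+\dots+a_1x+a_0$, and two strings are equivalent if their polynomials are $\sim$-equivalent. $\mathrm{Dom}_{p,q}$ is the set of $w\in\Sigma_q^*$ such that no string strictly smaller than $w$ in the length-lexicographic order on $\Sigma_q^*$ is equivalent to $w$, and $\psi_{p,q}:\mathrm{Dom}_{p,q}\to\mathbb{Z}^2$ sends $w$ to the $\sim$-class of the polynomial it represents. *)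

From HB Require Import structures.
From mathcomp Require Import all_boot all_order all_algebra.
Set Implicit Arguments. Unset Strict Implicit. Unset Printing Implicit Defensive.
Import Order.TTheory GRing.Theory Num.Theory.
Local Open Scope ring_scope.

Definition tpoly (p q : int) : {poly int} := 'X^2 + p%:P * 'X - q%:P.

Definition irreducible_Zx (f : {poly int}) : Prop :=
  f != 0 /\ f \isn't a GRing.unit /\
  forall g h : {poly int}, f = g * h -> g \is a GRing.unit \/ h \is a GRing.unit.

Definition tequiv (p q : int) (f g : {poly int}) : Prop :=
  exists h : {poly int}, f - g = h * tpoly p q.

Definition in_Sigma (q : int) (a : int) : bool := `|a| < `|q|.
Definition is_word (q : int) (w : seq int) : bool := all (in_Sigma q) w.

(* the string a_0 a_1 ... a_n represents a_n x^n + ... + a_1 x + a_0 *)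
Definition word_poly (w : seq int) : {poly int} := Poly w.

Fixpoint lex_lt (u w : seq int) : bool :=
  match u, w with
  | a :: u', b :: w' => (a < b) || ((a == b) && lex_lt u' w')
  | _, _ => false
  end.

Definition llex_lt (u w : seq int) : bool :=
  (size u < size w)%N || ((size u == size w) && lex_lt u w).

Definition in_Dom (p q : int) (w : seq int) : Prop :=
  is_word q w /\
  forall u, is_word q u -> llex_lt u w -> ~ tequiv p q (word_poly u) (word_poly w).

(* Z^2 identified with Z[x]/<t> via (h1,h2) |-> [h1 x + h2] *)
Definition pair_poly (h : int * int) : {poly int} := h.1%:P * 'X + h.2%:P.

Definition psi_is (p q : int) (w : seq int) (h : int * int) : Prop :=
  in_Dom p q w /\ tequiv p q (word_poly w) (pair_poly h).

Definition in_cyclic (gamma h : int * int) : Prop :=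
  exists k : int, h = (k * gamma.1, k * gamma.2).

Definition in_preimage (p q : int) (gamma : int * int) (w : seq int) : Prop :=
  exists h, psi_is p q w h /\ in_cyclic gamma h.

(* a language L over Sigma_q is regular: accepted by a DFA with finite state set
   (transition function given on all of int; only letters of Sigma_q matter) *)
Definition regular_lang (q : int) (L : seq int -> Prop) : Prop :=
  exists (Q : finType) (s : Q) (d : Q -> int -> Q) (F : pred Q),
    forall w, is_word q w -> (L w <-> F (foldl d s w)).

From HB Require Import structures.
From mathcomp Require Import all_boot all_order all_algebra.
From mathcomp Require Import ring zify.
From Stdlib Require Import Classical.
Import Order.TTheory GRing.Theory Num.Theory.
Set Implicit Arguments.
Unset Strict Implicit.
Unset Printing Implicit Defensive.
Local Open Scope ring_scope.

(* Every residue class mod [t] is represented by a word over [Sigma_q] (digit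
   expansion, which terminates because [1 + |p| < |q|]), hence by a minimal word in
   [Dom]; since minimal words of bounded length have bounded value, [Dom] contains
   arbitrarily long words over [<gamma>].  If a DFA accepted the language, pumping
   such a word [u v z] would put [u z] and [u v v z] in it too, so that
   [x^|v| (k2 - k1) gamma ~ (k3 - k2) gamma].  Modulo [t], [x^m] with [m > 0] equals
   some [a x + b] with [a] coprime to [q], hence nonzero, and [Z[x]/(t)] is a domain
   because the irreducible monic [t] has no rational root.  So [k1 = k2], i.e.
   [u z ~ u v z] with [u z] shorter, contradicting minimality. *)

Lemma word_poly_cons a w : word_poly (a :: w) = a%:P + 'X * word_poly w.
Proof. by rewrite /word_poly /= cons_poly_def addrC mulrC. Qed.

Lemma word_poly_cat u w :
  word_poly (u ++ w) = word_poly u + 'X^(size u) * word_poly w.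
Proof.
elim: u => [|a u IH]; first by rewrite expr0 mul1r /word_poly /= add0r.
by rewrite cat_cons !word_poly_cons IH /= exprS; ring.
Qed.

Lemma is_word_cat q u w : is_word q (u ++ w) = is_word q u && is_word q w.
Proof. by rewrite /is_word all_cat. Qed.

Lemma pair_polyZ k (g : int * int) :
  pair_poly (k * g.1, k * g.2) = k%:P * pair_poly g.
Proof. by rewrite /pair_poly /= !rmorphM /=; ring. Qed.

Section TEquiv.
Variables p q : int.
Notation teq := (tequiv p q).

Lemma tequiv_refl f : teq f f.
Proof. by exists 0; rewrite subrr mul0r. Qed.

Lemma tequiv_sym f g : teq f g -> teq g f.
Proof. by case=> h e; exists (- h); rewrite mulNr -e opprB. Qed.

Lemma tequiv_trans f g k : teq f g -> teq g k -> teq f k.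
Proof. by case=> h e [h' e']; exists (h + h'); rewrite mulrDl -e -e'; ring. Qed.

Lemma tequivD f g f' g' : teq f g -> teq f' g' -> teq (f + f') (g + g').
Proof. by case=> h e [h' e']; exists (h + h'); rewrite mulrDl -e -e'; ring. Qed.

Lemma tequivB f g f' g' : teq f g -> teq f' g' -> teq (f - f') (g - g').
Proof. by case=> h e [h' e']; exists (h - h'); rewrite mulrBl -e -e'; ring. Qed.

Lemma tequivMl c f g : teq f g -> teq (c * f) (c * g).
Proof. by case=> h e; exists (c * h); rewrite -mulrA -e; ring. Qed.

Lemma tequiv0 f g : teq (f - g) 0 -> teq f g.
Proof. by case=> h e; exists h; rewrite -e subr0. Qed.

(* Modulo [t], [x^2 = q - p x]. *)
Lemma tequiv_mulX_pair (a h1 h2 : int) :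
  teq (a%:P + 'X * pair_poly (h1, h2)) (pair_poly (h2 - p * h1, a + q * h1)).
Proof.
by exists h1%:P; rewrite /pair_poly /tpoly /= !rmorphD !rmorphM /= !rmorphN /=; ring.
Qed.

Lemma tequiv_pair_mul a b c d :
  teq (pair_poly (a, b) * pair_poly (c, d))
      (pair_poly (a * d + b * c - a * c * p, a * c * q + b * d)).
Proof.
exists (a * c)%:P.
by rewrite /pair_poly /tpoly /= !rmorphD ?rmorphB ?rmorphN !rmorphM /=; ring.
Qed.

Fixpoint word_pair (w : seq int) : int * int :=
  if w is a :: w' then
    let h := word_pair w' in (h.2 - p * h.1, a + q * h.1)
  else (0, 0).

Lemma tequiv_word_pair w : teq (word_poly w) (pair_poly (word_pair w)).
Proof.
elim: w => [|a w IH].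
  by exists 0; rewrite mul0r /word_poly /pair_poly /= !polyC0 mul0r !addr0 subrr.
rewrite word_poly_cons /=; apply: tequiv_trans (tequiv_mulX_pair _ _ _).
by apply: tequivD (tequiv_refl _) _; apply: tequivMl; case: (word_pair w) IH.
Qed.

Fixpoint Xpow_pair (m : nat) : int * int :=
  if m is m'.+1 then
    let h := Xpow_pair m' in (h.2 - p * h.1, q * h.1)
  else (0, 1).

Lemma tequiv_Xpow_pair m : teq 'X^m (pair_poly (Xpow_pair m)).
Proof.
elim: m => [|m IH].
  by exists 0; rewrite expr0 /pair_poly /= polyC0 polyC1 !mul0r add0r subrr.
rewrite exprS /= -[q * _]add0r; apply: tequiv_trans (tequiv_mulX_pair _ _ _).
by rewrite polyC0 add0r; apply: tequivMl; case: (Xpow_pair m) IH.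
Qed.

Lemma size_tpoly : size (tpoly p q) = 3%N.
Proof.
rewrite /tpoly -addrA size_polyDl ?size_polyXn //.
rewrite (leq_ltn_trans (size_polyD _ _)) // gtn_max size_polyN size_polyC.
rewrite (leq_ltn_trans (size_polyMleq _ _)) ?size_polyC ?size_polyX //.
  by case: (q != 0).
by case: (p != 0).
Qed.

Lemma tpoly_monic : tpoly p q \is monic.
Proof. by rewrite monicE /lead_coef size_tpoly /tpoly !coefE /=; apply/eqP; lia. Qed.

Lemma size_pair_poly h : (size (pair_poly h) <= 2)%N.
Proof.
rewrite (leq_trans (size_polyD _ _)) // geq_max size_polyC.
rewrite (leq_trans (size_polyMleq _ _)) ?size_polyC ?size_polyX.
  by case: (h.2 != 0).
by case: (h.1 != 0).
Qed.

(* A nonzero multiple of the monic quadratic [t] has degree at least 2. *)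
Lemma pair_tequiv0 h : teq (pair_poly h) 0 -> h = (0, 0).
Proof.
case=> k; rewrite subr0 => e.
have k0 : k = 0.
  apply/eqP; apply: contraT => kn; have := size_Mmonic kn tpoly_monic.
  have k0 : (0 < size k)%N by rewrite size_poly_gt0.
  by rewrite -e size_tpoly; have := size_pair_poly h; lia.
move: e; rewrite k0 mul0r /pair_poly => e.
have := congr1 (fun f : {poly int} => f`_0) e.
have := congr1 (fun f : {poly int} => f`_1) e.
by rewrite !coefE /=; case: h {e} => ? ? /= ? ?; congr pair; lia.
Qed.

Lemma pair_tequiv_inj h h' : teq (pair_poly h) (pair_poly h') -> h = h'.
Proof.
case: h h' => [h1 h2] [h1' h2'] e.
have : teq (pair_poly (h1 - h1', h2 - h2')) 0.
  have -> : pair_poly (h1 - h1', h2 - h2') = pair_poly (h1, h2) - pair_poly (h1', h2').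
    by rewrite /pair_poly /= !rmorphB /=; ring.
  by rewrite -(subrr (pair_poly (h1', h2'))); apply: tequivB e (tequiv_refl _).
by move/pair_tequiv0 => [e1 e2]; congr pair; lia.
Qed.

End TEquiv.

Lemma int_digit_ge0 (q h : int) : q != 0 -> 0 <= h ->
  exists d k, h = d + q * k /\ 0 <= d < `|q| /\ `|q * k| <= h.
Proof.
move=> q0 h0; exists (h %% q)%Z, (h %/ q)%Z.
have e := divz_eq h q; have m0 := modz_ge0 h q0; have m1 := ltz_mod h q0.
split; first by rewrite {1}e; ring.
split; first by rewrite m0 m1.
set d := (h %% q)%Z in e m0 m1 *; set k := (h %/ q)%Z in e *.
have [qk0|qk0] := lerP 0 (q * k); first by rewrite ger0_norm //; lia.
(* a negative multiple of [q] is at most [-|q|], too small for [h - d] *)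
have : `|q| <= `|q * k|.
  rewrite normrM ler_peMr // norm_intr_ge1 //.
  by apply: contraTneq qk0 => ->; rewrite mulr0.
by rewrite (ltr0_norm qk0); lia.
Qed.

Lemma int_digit (q h : int) : q != 0 ->
  exists d k, h = d + q * k /\ `|d| < `|q| /\ `|q * k| <= `|h|.
Proof.
move=> q0; have [h0|h0] := lerP 0 h.
  have [d [k [e [/andP [d0 d1] b]]]] := int_digit_ge0 q0 h0.
  by exists d, k; rewrite (ger0_norm d0) (ger0_norm h0).
have [d [k [e [/andP [d0 d1] b]]]] := int_digit_ge0 (h := - h) q0 ltac:(lia).
exists (- d), (- k); rewrite normrN (ger0_norm d0) (ltr0_norm h0) mulrN normrN.
by split; lia.
Qed.

(* With [Q = |q|] and [P = |p|]: two digit-extraction steps take a pair bounded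
   by [N] (first coordinate weighted by [Q]) to one bounded by [N - 1].  This is
   where [1 + |p| < |q|] is used. *)
Lemma two_digit_steps_decrease (Q P N a1 a2 b1 b2 c1 c2 : int) :
  0 <= P -> P + 2 <= Q ->
  0 <= a1 -> 0 <= a2 -> 0 <= b1 -> 0 <= b2 -> 0 <= c1 -> 0 <= c2 ->
  Q * a1 <= N -> a2 <= N -> 1 <= N -> Q * b1 <= a2 -> b2 <= a1 + P * b1 ->
  Q * c1 <= b2 -> c2 <= b1 + P * c1 -> Q * c1 <= N - 1 /\ c2 <= N - 1.
Proof.
move=> P0 PQ a10 a20 b10 b20 c10 c20 h1 h2 N1 h3 h4 h5 h6.
have Qc1 : Q * (Q * c1) <= (1 + P) * N.
  have : Q * (Q * c1) <= Q * b2 by nia.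
  have : Q * b2 <= Q * a1 + P * (Q * b1) by nia.
  have : P * (Q * b1) <= P * N by nia.
  nia.
have Qc2 : Q * (Q * c2) <= (Q + P + P * P) * N.
  have : Q * (Q * c2) <= Q * (Q * b1) + P * (Q * (Q * c1)) by nia.
  have : Q * (Q * b1) <= Q * N by nia.
  have : P * (Q * (Q * c1)) <= P * ((1 + P) * N) by nia.
  nia.
have : (1 + P) * N < Q * N by nia.
have : (Q + P + P * P) * N < Q * Q * N.
  have : Q + P + P * P < Q * Q by nia.
  nia.
nia.
Qed.

Section Representation.
Variables p q : int.
Hypothesis pq : 1 + `|p| < `|q|.

Lemma exists_word_tequiv h :
  exists w, is_word q w /\ tequiv p q (word_poly w) (pair_poly h).
Proof.
have q0 : q != 0 by rewrite -normr_gt0; lia.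
suff H (N : nat) : forall h : int * int, `|q| * `|h.1| <= N%:Z -> `|h.2| <= N%:Z ->
    exists w, is_word q w /\ tequiv p q (word_poly w) (pair_poly h).
  by apply: (H (absz (`|q| * `|h.1| + `|h.2|))); lia.
elim/ltn_ind: N => N IH [h1 h2] /= b1 b2.
have [/andP [/eqP -> /eqP ->]|hn] := boolP ((h1 == 0) && (h2 == 0)).
  by exists [::]; split => //; exact: (tequiv_word_pair p q [::]).
have N1 : 1 <= N%:Z.
  move: hn; rewrite negb_and => /orP [] /eqP hz.
    have : 0 < `|h1| by rewrite normr_gt0; apply/eqP.
    nia.
  have : 0 < `|h2| by rewrite normr_gt0; apply/eqP.
  lia.
have [d0 [k [e0 [d0b kb]]]] := int_digit h2 q0.
have [d1 [k' [e1 [d1b k'b]]]] := int_digit (h1 + p * k) q0.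
have [c1 c2] : `|q| * `|k'| <= (N.-1)%:Z /\ `|k + p * k'| <= (N.-1)%:Z.
  have -> : (N.-1)%:Z = N%:Z - 1 by lia.
  apply: (@two_digit_steps_decrease `|q| `|p| N%:Z `|h1| `|h2| `|k| `|h1 + p * k|);
  by lia.
have [w [ww ew]] := IH N.-1 ltac:(lia) (k', k + p * k') c1 c2.
exists (d0 :: d1 :: w); split; first by rewrite /is_word /= /in_Sigma d0b d1b.
have -> : (h1, h2) = (h1 + p * k - p * k, d0 + q * k) by congr pair; lia.
rewrite !word_poly_cons; apply: tequiv_trans (tequiv_mulX_pair _ _ _ _ _).
apply: tequivD (tequiv_refl _ _ _) _; apply: tequivMl.
have -> : (k, h1 + p * k) = (k + p * k' - p * k', d1 + q * k') by congr pair; lia.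
apply: tequiv_trans (tequiv_mulX_pair _ _ _ _ _).
exact: tequivD (tequiv_refl _ _ _) (tequivMl _ ew).
Qed.

End Representation.

(* The value of a word read as a numeral in base [2Q - 1] with digits shifted
   by [Q - 1]; it embeds [lex_lt] on words of a fixed length into [<] on int. *)
Fixpoint word_rank (Q : int) (u : seq int) : int :=
  if u is a :: u' then (a + (Q - 1)) * (2 * Q - 1) ^+ size u' + word_rank Q u'
  else 0.

Lemma word_rank_bounds q u : is_word q u ->
  0 <= word_rank `|q| u < (2 * `|q| - 1) ^+ size u.
Proof.
elim: u => [|a u IH] /=; first by rewrite expr0.
rewrite /is_word /= /in_Sigma => /andP [ha /IH /andP [r0 r1]].
by rewrite exprS; set X := (2 * `|q| - 1) ^+ size u in r1 *; apply/andP; split; nia.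
Qed.

Lemma word_rank_lex q u w : is_word q u -> is_word q w -> size u = size w ->
  lex_lt u w -> word_rank `|q| u < word_rank `|q| w.
Proof.
elim: u w => [|a u IH] [|b w] //= /andP [ha hu] /andP [hb hw] [es].
case/orP => [ab|/andP [/eqP -> lt_uw]]; last first.
  by have := IH w hu hw es lt_uw; rewrite es; lia.
have /andP [r0 r1] := word_rank_bounds hu; have /andP [s0 s1] := word_rank_bounds hw.
move: ha hb; rewrite /in_Sigma es in r1 *.
by set X := (2 * `|q| - 1) ^+ size w in r1 s1 *; nia.
Qed.

Lemma exists_Dom_tequiv p q w : is_word q w ->
  exists w', in_Dom p q w' /\ tequiv p q (word_poly w') (word_poly w).
Proof.
suff H (n c : nat) u : is_word q u -> size u = n -> word_rank `|q| u = c%:Z ->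
    exists w', in_Dom p q w' /\ tequiv p q (word_poly w') (word_poly u).
  move=> ww; have /andP [r0 _] := word_rank_bounds ww.
  by apply: (H _ (absz (word_rank `|q| w)) w ww erefl); lia.
elim/ltn_ind: n c u => n IHn; elim/ltn_ind => c IHc u uw su ru.
have [Du|nDu] := classic (in_Dom p q u).
  by exists u; split => //; exact: tequiv_refl.
have [v [vw lt_vu ev]] : exists v, [/\ is_word q v, llex_lt v u &
    tequiv p q (word_poly v) (word_poly u)].
  apply: NNPP => nE; apply: nDu; split => // v vw lt_vu ev.
  by apply: nE; exists v.
suff [w' [Dw' e']] : exists w', in_Dom p q w' /\ tequiv p q (word_poly w') (word_poly v).
  by exists w'; split => //; apply: tequiv_trans e' ev.
have /andP [r0 _] := word_rank_bounds vw.
case/orP: lt_vu => [lt_size|/andP [/eqP eq_size lt_lex]].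
  by apply: (IHn (size v) _ (absz (word_rank `|q| v)) v vw erefl); [rewrite -su | lia].
have := word_rank_lex vw uw eq_size lt_lex.
by move=> lt_rank; apply: (IHc (absz (word_rank `|q| v))) => //; rewrite ?eq_size //; lia.
Qed.

Section Irreducible.
Variables p q : int.
Hypothesis irr_t : irreducible_Zx (tpoly p q).

Lemma tpoly_no_int_root r : r * r + p * r - q != 0.
Proof.
apply/eqP => hr; have [_ [_ irr]] := irr_t.
have e : tpoly p q = ('X - r%:P) * ('X + (r + p)%:P).
  have -> : q = r * r + p * r by lia.
  by rewrite /tpoly !rmorphD !rmorphM /=; ring.
by case: (irr _ _ e); rewrite poly_unitE ?size_XsubC ?size_XaddC.
Qed.

(* [b^2 - a b p - a^2 q = a^2 t(-b/a)]; rational roots of the monic [t] are integers. *)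
Lemma tpoly_no_rat_root a b : a != 0 -> b * b - a * b * p - a * a * q != 0.
Proof.
move=> a0; apply/eqP => e.
have [a' ea] := dvdzP (dvdz_gcdl a b); have [b' eb] := dvdzP (dvdz_gcdr a b).
have [u [v euv]] := Bezoutz a b.
set g := gcdz a b in ea eb euv.
have g0 : g != 0 by apply: contraNneq a0 => g0; rewrite ea g0 mulr0.
have a'0 : a' != 0 by apply: contraNneq a0 => a'0; rewrite ea a'0 mul0r.
have cop : coprimez a' b'.
  apply/coprimezP; exists (u, v) => /=.
  by apply: (mulIf g0); rewrite mul1r -[in RHS]euv ea eb; ring.
have e' : b' * b' - a' * b' * p - a' * a' * q = 0.
  by apply: (mulIf (mulf_neq0 g0 g0)); rewrite mul0r -{}e ea eb; ring.
have : (a' %| b' * b')%Z by apply/dvdzP; exists (b' * p + a' * q); lia.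
rewrite Gauss_dvdzr // => /dvdzP [k ek].
have : a' * a' * ((- k) * (- k) + p * (- k) - q) = 0 by rewrite -e' ek; ring.
move/eqP; rewrite mulf_eq0 (negbTE (mulf_neq0 a'0 a'0)).
by rewrite (negbTE (tpoly_no_int_root _)).
Qed.

Lemma pair_mul_tequiv0 g h :
  tequiv p q (pair_poly g * pair_poly h) 0 -> g = (0, 0) \/ h = (0, 0).
Proof.
case: g h => [a b] [c d] /(tequiv_trans (tequiv_sym (tequiv_pair_mul _ _ _ _ _ _))).
move/pair_tequiv0 => [E1 E2].
have [a0|a0] := eqVneq a 0.
  have [b0|b0] := eqVneq b 0; [by left; rewrite a0 b0 | right].
  have /eqP : b * c = 0 by rewrite -E1 a0; ring.
  have /eqP : b * d = 0 by rewrite -E2 a0; ring.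
  by rewrite !mulf_eq0 (negbTE b0) => /eqP -> /eqP ->.
have [c0|c0] := eqVneq c 0.
  have [d0|d0] := eqVneq d 0; [by right; rewrite c0 d0 | left].
  have /eqP : a * d = 0 by rewrite -E1 c0; ring.
  have /eqP : b * d = 0 by rewrite -E2 c0; ring.
  by rewrite !mulf_eq0 (negbTE d0) !orbF => /eqP -> /eqP ->.
have /eqP : c * (b * b - a * b * p - a * a * q) = 0.
  have -> : c * (b * b - a * b * p - a * a * q)
    = b * (a * d + b * c - a * c * p) - a * (a * c * q + b * d) by ring.
  by rewrite E1 E2 !mulr0 subrr.
by rewrite mulf_eq0 (negbTE c0) (negbTE (@tpoly_no_rat_root a b a0)).
Qed.

End Irreducible.

Section Eigen.
Variables p q : int.
Hypotheses (irr_t : irreducible_Zx (tpoly p q)) (cop_pq : coprimez p q).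
Hypothesis q_gt1 : 1 < `|q|.

Lemma Xpow_pair1_mod m : exists c, (Xpow_pair p q m.+1).1 = (- p) ^+ m + q * c.
Proof.
suff [] : (exists c, (Xpow_pair p q m.+1).1 = (- p) ^+ m + q * c) /\
          (exists c, (Xpow_pair p q m.+2).1 = (- p) ^+ m.+1 + q * c) by [].
elim: m => [|m [_ [c IH]]].
  by split; exists 0; rewrite /= ?expr0 ?expr1; ring.
split; first by exists c.
exists ((Xpow_pair p q m.+1).1 - p * c).
have -> : (Xpow_pair p q m.+3).1
    = q * (Xpow_pair p q m.+1).1 - p * (Xpow_pair p q m.+2).1 by [].
by rewrite IH !exprS; ring.
Qed.

Lemma Xpow_pair1_neq0 m : (Xpow_pair p q m.+1).1 != 0.
Proof.
have [c ->] := Xpow_pair1_mod m; apply/eqP => e.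
have : coprimez ((- p) ^+ m) q.
  by apply/coprimezXl; rewrite coprimez_sym coprimezN coprimez_sym.
rewrite (_ : (- p) ^+ m = q * - c); last by rewrite -(subr0 ((- p) ^+ m)) -e; ring.
by rewrite coprimezMl /coprimez gcdzz; lia.
Qed.

Lemma tequiv_mulXn_multiple m e f g : (0 < m)%N -> g != (0, 0) ->
  tequiv p q ('X^m * (e%:P * pair_poly g)) (f%:P * pair_poly g) -> e = 0.
Proof.
case: m => // m _ g0 ef; apply/eqP; apply: contraT => e0.
set x := Xpow_pair p q m.+1.
have : tequiv p q (pair_poly (e * x.1, e * x.2 - f) * pair_poly g) 0.
  have -> : pair_poly (e * x.1, e * x.2 - f) * pair_poly g
      = e%:P * pair_poly x * pair_poly g - f%:P * pair_poly g.
    by rewrite /pair_poly /= !rmorphB !rmorphM /=; ring.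
  rewrite -(subrr (f%:P * pair_poly g)); apply: tequivB (tequiv_refl _ _ _).
  apply: tequiv_trans ef; rewrite mulrCA -mulrA.
  apply/tequivMl/tequiv_sym; rewrite mulrC [pair_poly x * _]mulrC.
  exact: tequivMl (tequiv_Xpow_pair _ _ _).
case/(pair_mul_tequiv0 irr_t) => [[/eqP] | /eqP]; last by rewrite (negbTE g0).
by rewrite mulf_eq0 (negbTE e0) (negbTE (Xpow_pair1_neq0 m)).
Qed.

End Eigen.

Section WordBound.
Variables p q : int.

Fixpoint word_bound (n : nat) : int :=
  if n is n'.+1 then `|q| + (`|p| + `|q| + 1) * word_bound n' else 0.

Lemma word_bound_ge0 n : 0 <= word_bound n.
Proof. by elim: n => //= n IH; nia. Qed.

Lemma word_bound_mono m n : (m <= n)%N -> word_bound m <= word_bound n.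
Proof.
move/subnK <-; elim: (n - m)%N => //= k IH.
by have := word_bound_ge0 (k + m); nia.
Qed.

Lemma word_pair_bound w : is_word q w ->
  `|(word_pair p q w).1| <= word_bound (size w) /\
  `|(word_pair p q w).2| <= word_bound (size w).
Proof.
elim: w => [|a w IH] //= /andP [ha /IH [b1 b2]].
have := word_bound_ge0 (size w); move: ha; rewrite /in_Sigma => ha.
by split; [rewrite (le_trans (ler_normB _ _)) | rewrite (le_trans (ler_normD _ _))];
  rewrite // normrM; nia.
Qed.

End WordBound.

Lemma in_preimage_Dom p q gamma w : in_preimage p q gamma w -> in_Dom p q w.
Proof. by case=> h [[]]. Qed.

Lemma in_preimage_tequiv p q gamma w : in_preimage p q gamma w ->
  exists k, tequiv p q (word_poly w) (k%:P * pair_poly gamma).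
Proof. by case=> h [[_ eh] [k hk]]; exists k; rewrite -pair_polyZ -hk. Qed.

Lemma exists_long_preimage_word p q gamma n :
  1 + `|p| < `|q| -> gamma != (0, 0) ->
  exists w, in_preimage p q gamma w /\ (n < size w)%N.
Proof.
case: gamma => g1 g2 pq g0; set k := word_bound p q n + 1.
have k_gt0 : 0 < k by have := word_bound_ge0 p q n; rewrite /k; lia.
have [w0 [ww0 e0]] := exists_word_tequiv pq (k * g1, k * g2).
have [w [Dw ew]] := exists_Dom_tequiv p ww0.
have ekw := tequiv_trans ew e0.
exists w; split; first by exists (k * g1, k * g2); split => //; exists k.
rewrite ltnNge; apply/negP => sw.
have eh := pair_tequiv_inj (tequiv_trans (tequiv_sym (tequiv_word_pair p q w)) ekw).
have [b1 b2] := word_pair_bound p (proj1 Dw).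
rewrite eh /= !normrM (gtr0_norm k_gt0) in b1 b2.
have := word_bound_mono p q sw; rewrite /k in b1 b2 k_gt0 *.
have [g1_0|] := eqVneq g1 0; last by rewrite -normr_gt0; nia.
have : g2 != 0 by apply: contraNneq g0 => g2_0; rewrite g1_0 g2_0.
by rewrite -normr_gt0; nia.
Qed.

Lemma foldl_pump (T : finType) (A : Type) (s : T) (d : T -> A -> T) (w : seq A) :
  (#|T| < size w)%N ->
  exists u v z, [/\ w = u ++ v ++ z, (0 < size v)%N,
    foldl d s (u ++ z) = foldl d s w & foldl d s (u ++ v ++ v ++ z) = foldl d s w].
Proof.
move=> sw; pose f (i : 'I_#|T|.+1) := foldl d s (take i w).
have /injectivePn [i [j nij fij]] : ~~ injectiveb f.
  by apply/injectiveP => /leq_card; rewrite card_ord ltnn.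
wlog lt_ij : i j nij fij / (i < j)%N.
  move=> H; have [|lt_ji|/val_inj eq_ij] := ltngtP i j; first exact: H.
    by apply: (H j i) => //; rewrite eq_sym.
  by rewrite eq_ij eqxx in nij.
have le_jw : (j <= size w)%N by have := ltn_ord j; lia.
set u := take i w; set v := drop i (take j w); set z := drop j w.
have tj : take j w = u ++ v.
  by rewrite /u /v -{1}(take_takel w (ltnW lt_ij)) cat_take_drop.
have ew : w = u ++ v ++ z by rewrite catA -tj cat_take_drop.
have st : foldl d s (u ++ v) = foldl d s u by rewrite -tj; exact: esym fij.
exists u, v, z; split => //.
- by rewrite size_drop size_takel //; lia.
- by rewrite [in RHS]ew catA [in RHS]foldl_cat st -foldl_cat.
- by rewrite [in RHS]ew [in LHS]catA [in LHS]foldl_cat st -foldl_cat.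
Qed.

Lemma pumped_preimage_contra p q gamma u v z :
  irreducible_Zx (tpoly p q) -> coprimez p q -> 1 < `|q| ->
  gamma != (0, 0) -> (0 < size v)%N ->
  in_preimage p q gamma (u ++ z) -> in_preimage p q gamma (u ++ v ++ z) ->
  ~ in_preimage p q gamma (u ++ v ++ v ++ z).
Proof.
move=> irr cop q_gt1 g0 v0 L1 L2 L3.
have [k1 E1] := in_preimage_tequiv L1; have [k2 E2] := in_preimage_tequiv L2.
have [k3 E3] := in_preimage_tequiv L3.
set G := pair_poly gamma in E1 E2 E3.
set W1 := word_poly (u ++ z) in E1; set W2 := word_poly (u ++ v ++ z) in E2.
have E21 : tequiv p q (W2 - W1) ((k2 - k1)%:P * G).
  by rewrite rmorphB mulrBl; exact: tequivB.
have E32 : tequiv p q ('X^(size v) * (W2 - W1)) ((k3 - k2)%:P * G).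
  have -> : 'X^(size v) * (W2 - W1) = word_poly (u ++ v ++ v ++ z) - W2.
    by rewrite /W1 /W2 !word_poly_cat; ring.
  by rewrite rmorphB mulrBl; exact: tequivB.
have k21 : k2 - k1 = 0.
  apply: (tequiv_mulXn_multiple irr cop q_gt1 v0 g0).
  exact: tequiv_trans (tequiv_sym (tequivMl _ E21)) E32.
apply: (proj2 (in_preimage_Dom L2) (u ++ z) (proj1 (in_preimage_Dom L1))).
  by rewrite /llex_lt !size_cat ltn_add2l -[X in (X < _)%N]add0n ltn_add2r v0.
by apply/tequiv_sym/tequiv0; move: E21; rewrite k21 polyC0 mul0r.
Qed.

Theorem mainTheorem7 (p q : int) :
  1 + `|p| < `|q| ->
  gcdz p q = 1%N ->
  irreducible_Zx (tpoly p q) ->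
  forall gamma : int * int, gamma != (0, 0) ->
  ~ regular_lang q (in_preimage p q gamma).
Proof.
move=> pq gcd1 irr gamma g0 [T [s [d [F accepts]]]].
have cop : coprimez p q by rewrite /coprimez gcd1.
have [w [Lw sw]] := exists_long_preimage_word #|T| pq g0.
have [u [v [z [ew v0 fold1 fold3]]]] := foldl_pump s d sw.
have := (in_preimage_Dom Lw).1; rewrite ew !is_word_cat => /and3P [wu wv wz].
have accepted w' :
    is_word q w' -> foldl d s w' = foldl d s w -> in_preimage p q gamma w'.
  move=> ww' fw'; apply/(accepts _ ww'); rewrite fw'.
  exact/(accepts _ (in_preimage_Dom Lw).1).
have L1 := accepted (u ++ z) ltac:(by rewrite is_word_cat wu wz) fold1.
have L3 := accepted (u ++ v ++ v ++ z) ltac:(by rewrite !is_word_cat wu wv wz) fold3.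
rewrite ew in Lw; apply: (pumped_preimage_contra irr cop _ g0 v0 L1 Lw L3); lia.
Qed.
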